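(* Consider an $\mathbb{H}_{2n+1}$-structure on $\mathbb{P}V$ such that $T$ fixes every point of the boundary hyperplane $\mathbb{P}V'$. For a point $o$ in the open orbit, let $v(o)$ denote the unique point of $\overline{\mathbb{I}\cdot o}\setminus\mathbb{I}\cdot o$. Then $v(o)$ does not depend on the choice of $o$ in the open orbit.
   Context: Work over $\mathbb{C}$, $n\ge1$. The Heisenberg group $\mathbb{H}_{2n+1}$ is $\mathbb{W}\times\mathbb{C}$ ($\mathbb{W}$ a $2n$-dimensional space with non-degenerate skew form $\omega$) with law $(w_1,t_1)(w_2,t_2)=(w_1+w_2,t_1+t_2+\tfrac12\omega(w_1,w_2))$; $T=(0,1)$, and $\mathbb{I}=\mathbb{C}T$ is its center. $V\cong\mathbb{C}^{2n+2}$. An $\mathbb{H}_{2n+1}$-structure on $\mathbb{P}V$ is an effective algebraic action with a dense open orbit; its boundary (the complement of the open orbit) is a hyperplane $\mathbb{P}V'$. For $o$ in the open orbit, $\overline{\mathbb{I}\cdot o}$ is a projective line and $\overline{\mathbb{I}\cdot o}\setminus\mathbb{I}\cdot o$ is a single point. *)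

(* The base field C is the complex numbers, realised as
   R[i] = complex R for an arbitrary R : realType (a model of the reals). *)
From HB Require Import structures.
From mathcomp Require Import all_boot all_order all_algebra.
From mathcomp Require Import reals.
From mathcomp Require Import complex.
From mathcomp Require mpoly.

Set Implicit Arguments.
Unset Strict Implicit.
Unset Printing Implicit Defensive.

Import Order.TTheory GRing.Theory Num.Theory.
Local Open Scope ring_scope.

Section Heis.
Variable C : fieldType.

Definition polyfun (m : nat) (f : 'rV[C]_m -> C) : Prop :=
  exists p : mpoly.mpoly m C, forall x : 'rV[C]_m,
    f x = mpoly.meval (fun i => x 0 i) p.

Definition heis_elt (n : nat) := ('rV[C]_(n.*2) * C)%type.

Definition heis_omega (n : nat) (Om : 'M[C]_(n.*2)) (w1 w2 : 'rV[C]_(n.*2)) : C :=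
  (w1 *m Om *m w2^T) 0 0.

Definition heis_mul (n : nat) (Om : 'M[C]_(n.*2)) (g h : heis_elt n) : heis_elt n :=
  (g.1 + h.1, g.2 + h.2 + 2^-1 * heis_omega Om g.1 h.1).

Definition heis_one (n : nat) : heis_elt n := (0, 0).

Definition heis_T (n : nat) : heis_elt n := (0, 1).

(** Points of P V, V = C^(2n+2): nonzero column vectors up to scalars. *)
Definition proj_eq (N : nat) (u v : 'cV[C]_N) : Prop :=
  exists2 c : C, c != 0 & u = c *: v.

Definition alg_rep (n : nat) (Om : 'M[C]_(n.*2))
    (rho : heis_elt n -> 'M[C]_(n.*2.+2)) : Prop :=
  [/\ rho (heis_one n) = 1%:M,
      (forall g h, rho (heis_mul Om g h) = rho g *m rho h) &
      (forall i j, polyfun (fun x : 'rV[C]_(n.*2 + 1) =>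
          rho (lsubmx x, rsubmx x 0 0) i j))].

Definition pv_effective (n : nat) (rho : heis_elt n -> 'M[C]_(n.*2.+2)) : Prop :=
  forall h, (exists c : C, rho h = c%:M) -> h = heis_one n.

Definition pv_orbit (n : nat) (rho : heis_elt n -> 'M[C]_(n.*2.+2))
    (S : heis_elt n -> Prop) (o p : 'cV[C]_(n.*2.+2)) : Prop :=
  exists2 h, S h & proj_eq p (rho h *m o).

Definition whole_group (n : nat) (h : heis_elt n) : Prop := True.

Definition center_I (n : nat) (h : heis_elt n) : Prop := exists t : C, h = (0, t).

(** A set of points of P V is represented by a
    scalar-invariant predicate on nonzero vectors. *)
Definition zar_closed (N : nat) (Z : 'cV[C]_N -> Prop) : Prop :=
  exists s : seq (mpoly.mpoly N C), forall v : 'cV[C]_N, v != 0 ->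
    (Z v <-> all (fun p => mpoly.meval (fun i => v i 0) p == 0) s).

Definition zar_open (N : nat) (U : 'cV[C]_N -> Prop) : Prop :=
  zar_closed (fun v => ~ U v).

Definition zar_closure (N : nat) (S : 'cV[C]_N -> Prop) (p : 'cV[C]_N) : Prop :=
  forall f : mpoly.mpoly N C,
    (forall v, v != 0 -> S v -> mpoly.meval (fun i => v i 0) f = 0) ->
    mpoly.meval (fun i => p i 0) f = 0.

Definition heis_structure (n : nat) (Om : 'M[C]_(n.*2))
    (rho : heis_elt n -> 'M[C]_(n.*2.+2)) (o0 : 'cV[C]_(n.*2.+2)) : Prop :=
  [/\ alg_rep Om rho, pv_effective rho, o0 != 0,
      zar_open (pv_orbit rho (@whole_group n) o0) &
      (forall p, p != 0 -> zar_closure (pv_orbit rho (@whole_group n) o0) p)].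

End Heis.

From HB Require Import structures.
From mathcomp Require Import all_boot all_order all_algebra.
From mathcomp Require Import reals.
From mathcomp Require Import complex.
From mathcomp Require Import mpoly ring.
From Stdlib Require Import Classical.
Import Order.TTheory GRing.Theory Num.Theory.
Local Open Scope ring_scope.
Set Implicit Arguments. Unset Strict Implicit. Unset Printing Implicit Defensive.

(* The centre acts by [rhoI t := rho (0, t)], whose matrix entries are polynomial
   in [t]; a polynomial curve that is geometric (with ratio [c]) along the
   naturals is constant, so every eigenvalue of [rhoI 1] is [1].  Hence the rows
   fixed by the centre form a nonzero [rho]-stable subspace on which the
   operators [rho (w, 0)] commute, and a common eigenvector there is a linear
   form [xi] with [xi rho(h) = c_h xi]; by density [xi] does not vanish on the
   open orbit.  As [T] fixes every point of [ker xi], [rhoI t] is the identity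
   there, which makes it a transvection [rhoI t = 1 + t q xi] with [xi q = 0],
   and [q <> 0] by effectiveness.  The [I]-orbit of [o] is then the affine line
   [{[o + s q]}], whose Zariski closure adds exactly the point [[q]], whatever
   [o] is. *)

Section PolynomialFunctions.
Variable C : numDomainType.

Definition polynomial_fun (f : C -> C) := exists p : {poly C}, forall x, f x = p.[x].

Lemma polynomial_fun_cst a : polynomial_fun (fun=> a).
Proof. by exists a%:P => x; rewrite hornerC. Qed.

Lemma polynomial_fun_id : polynomial_fun id.
Proof. by exists 'X => x; rewrite hornerX. Qed.

Lemma polynomial_funB f g :
  polynomial_fun f -> polynomial_fun g -> polynomial_fun (fun x => f x - g x).
Proof. by move=> [p fp] [q gq]; exists (p - q) => x; rewrite fp gq hornerD hornerN. Qed.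

Lemma polynomial_funM f g :
  polynomial_fun f -> polynomial_fun g -> polynomial_fun (fun x => f x * g x).
Proof. by move=> [p fp] [q gq]; exists (p * q) => x; rewrite fp gq hornerM. Qed.

Lemma polynomial_fun_sum (I : finType) (F : I -> C -> C) :
  (forall i, polynomial_fun (F i)) -> polynomial_fun (fun x => \sum_i F i x).
Proof.
move=> /fin_all_exists [P FP]; exists (\sum_i P i) => x.
by rewrite horner_sum; apply: eq_bigr => i _; rewrite FP.
Qed.

Lemma meval_line_polynomial m (p : mpoly m C) (a b : 'I_m -> C) :
  polynomial_fun (fun s => meval (fun i => a i + s * b i) p).
Proof.
exists (\sum_(e <- msupp p) mcoeff e p *:
  \prod_i ((a i)%:P + 'X * (b i)%:P) ^+ fun_of_multinom e i) => s.
rewrite mevalE horner_sum; apply: eq_bigr => e _.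
rewrite hornerZ horner_prod; congr (_ * _); apply: eq_bigr => i _.
by rewrite horner_exp hornerD hornerM hornerX !hornerC.
Qed.

Lemma poly_eq0_nat (p : {poly C}) k :
  (forall m, (k <= m)%N -> p.[m%:R] = 0) -> p = 0.
Proof.
move=> p_nat; apply/eqP/negPn/negP => p_neq0.
have roots : all (root p) [seq m%:R | m <- iota k (size p)].
  by apply/allP => x /mapP[m]; rewrite mem_iota => /andP[km _] ->; apply/rootP/p_nat.
have uniq_roots : uniq [seq m%:R : C | m <- iota k (size p)].
  by rewrite map_inj_uniq ?iota_uniq // => i j /eqP; rewrite eqr_nat => /eqP.
by have := max_poly_roots p_neq0 roots uniq_roots; rewrite size_map size_iota ltnn.
Qed.

(* If [a <> 0], then [p(x+1) = c p(x)] on the naturals forces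
   [p \Po ('X + 1) = c *: p]; compare leading coefficients to get [c = 1]. *)
Lemma polynomial_fun_geometric f c a :
  polynomial_fun f -> (forall m, f m%:R = c ^+ m * a) -> forall x, f x = a.
Proof.
move=> [p fp] f_nat x.
have c1 : a != 0 -> c = 1.
  move=> a_neq0; have p_neq0 : p != 0.
    by apply: contraNneq a_neq0 => p0; rewrite -[a]mul1r -(expr0 c) -f_nat fp p0 horner0.
  have : p \Po ('X + 1%:P) - c *: p = 0.
    apply: (@poly_eq0_nat _ 0) => m _.
    rewrite hornerD hornerN hornerZ horner_comp hornerD hornerX hornerC natr1 -!fp !f_nat.
    by rewrite exprS mulrA subrr.
  move/eqP; rewrite subr_eq0 => /eqP/(congr1 lead_coef).
  rewrite lead_coef_comp ?size_XaddC // lead_coefXaddC expr1n mulr1 lead_coefZ.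
  by move/eqP; rewrite -{1}[lead_coef p]mul1r (inj_eq (mulIf _)) ?lead_coef_eq0 // => /eqP.
have : p - a%:P = 0.
  apply: (@poly_eq0_nat _ 0) => m _; rewrite hornerD hornerN hornerC -fp f_nat.
  by have [-> | /c1 ->] := eqVneq a 0; rewrite ?mulr0 ?expr1n ?mul1r subrr.
by move/eqP; rewrite subr_eq0 => /eqP p_a; rewrite fp p_a hornerC.
Qed.

Definition poly_curve m k (F : C -> 'M[C]_(m, k)) :=
  forall i j, polynomial_fun (fun t => F t i j).

Lemma poly_curve_mull l m k (A : 'M[C]_(l, m)) (F : C -> 'M[C]_(m, k)) :
  poly_curve F -> poly_curve (fun t => A *m F t).
Proof.
move=> F_poly i j; have [p Fp] := @polynomial_fun_sum _ (fun r t => A i r * F t r j)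
  (fun r => polynomial_funM (polynomial_fun_cst _) (F_poly r j)).
by exists p => t; rewrite mxE Fp.
Qed.

Lemma poly_curve_mulr m k l (F : C -> 'M[C]_(m, k)) (B : 'M[C]_(k, l)) :
  poly_curve F -> poly_curve (fun t => F t *m B).
Proof.
move=> F_poly i j; have [p Fp] := @polynomial_fun_sum _ (fun r t => F t i r * B r j)
  (fun r => polynomial_funM (F_poly i r) (polynomial_fun_cst _)).
by exists p => t; rewrite mxE Fp.
Qed.

Lemma poly_curve_geometric m k (F : C -> 'M[C]_(m, k)) c X :
  poly_curve F -> (forall j, F j%:R = c ^+ j *: X) -> forall t, F t = X.
Proof.
move=> F_poly F_nat t; apply/matrixP => i j.
by apply: (polynomial_fun_geometric (F_poly i j)) => r; rewrite F_nat mxE.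
Qed.

Lemma poly_curve_additive m k (F : C -> 'M[C]_(m, k)) :
  poly_curve F -> {morph F : s t / s + t} -> forall t, F t = t *: F 1.
Proof.
move=> F_poly F_add t; apply/eqP; rewrite -subr_eq0; apply/eqP.
have F_nat j : F j%:R = j%:R *: F 1.
  elim: j => [|j IH]; last by rewrite -natr1 F_add IH scalerDl scale1r.
  by apply/(@addIr _ (F 0)); rewrite -F_add !addr0 scale0r add0r.
apply: (@poly_curve_geometric _ _ (fun t => F t - t *: F 1) 1 0) => [i j|j].
  have [p Fp] := polynomial_funB (F_poly i j)
    (polynomial_funM polynomial_fun_id (polynomial_fun_cst (F 1 i j))).
  by exists p => s; rewrite !mxE Fp.
by rewrite F_nat subrr scaler0.
Qed.

End PolynomialFunctions.

Section ZariskiClosure.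
Variable C : fieldType.

Definition form_mpoly N (l : 'rV[C]_N) : mpoly N C :=
  \sum_i l 0 i *: mpolyX C (mnm1 i).

Lemma meval_form_mpoly N (l : 'rV[C]_N) (v : 'cV[C]_N) :
  meval (fun i => v i 0) (form_mpoly l) = (l *m v) 0 0.
Proof.
rewrite /form_mpoly raddf_sum mxE; apply: eq_bigr => i _.
by rewrite /= mevalZ mevalXU.
Qed.

Lemma zar_closure_form N (S : 'cV[C]_N -> Prop) (l : 'rV[C]_N) p :
  zar_closure S p -> (forall v, v != 0 -> S v -> l *m v = 0) -> l *m p = 0.
Proof.
move=> Sp lS; rewrite [l *m p]mx11_scalar -meval_form_mpoly Sp ?raddf0 // => v v0 Sv.
by rewrite meval_form_mpoly lS // mxE.
Qed.

Lemma separating_form N k (B : 'M[C]_(k, N)) (u : 'rV[C]_N) :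
  ~~ (u <= B)%MS -> exists l : 'cV[C]_N, B *m l = 0 /\ u *m l != 0.
Proof.
rewrite submxE => uB; have [j uBj] : exists j, (u *m cokermx B) 0 j != 0.
  apply/existsP; apply: contraR uB; rewrite negb_exists => /forallP uB0.
  by apply/eqP/rowP => j; rewrite [RHS]mxE; apply/eqP; move: (uB0 j); rewrite negbK.
exists (cokermx B *m delta_mx j 0); split; first by rewrite mulmxA mulmx_coker mul0mx.
by apply: contraNneq uBj; rewrite mulmxA -colE => /colP/(_ 0); rewrite !mxE => ->.
Qed.

Lemma zar_closure_row_space N k (S : 'cV[C]_N -> Prop) (B : 'M[C]_(k, N)) p :
  zar_closure S p -> (forall v, v != 0 -> S v -> (v^T <= B)%MS) -> (p^T <= B)%MS.
Proof.
move=> Sp SB; apply/negPn/negP => /separating_form[l [Bl pl]].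
suff : l^T *m p = 0.
  by move/(congr1 trmx); rewrite trmx_mul trmxK trmx0 => /eqP; rewrite (negbTE pl).
apply: zar_closure_form Sp _ => v v0 /(SB v v0)/submxP[X vB].
by apply: trmx_inj; rewrite trmx_mul trmxK trmx0 vB -mulmxA Bl mulmx0.
Qed.

Lemma eq_zar_closure N (S T : 'cV[C]_N -> Prop) p :
  (forall v, S v <-> T v) -> zar_closure S p -> zar_closure T p.
Proof. by move=> ST Sp f fT; apply: Sp => v v0 /ST; apply: fT. Qed.

End ZariskiClosure.

Section AffineLine.
Variable C : numFieldType.

Definition affine_line N (o q v : 'cV[C]_N) := exists s, proj_eq v (o + s *: q).

Lemma affine_line_boundary N (o q p : 'cV[C]_N) :
  (forall c, o != c *: q) -> p != 0 ->
  (zar_closure (affine_line o q) p /\ ~ affine_line o q p) <-> proj_eq p q.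
Proof.
move=> o_notin_q p_neq0.
have line_neq0 s : o + s *: q != 0.
  by apply: contra_neq (o_notin_q (- s)); rewrite scaleNr => /eqP; rewrite addr_eq0 => /eqP.
split=> [[p_cl p_notin] | [b b_neq0 ->]].
  have : (p^T <= o^T + q^T)%MS.
    apply: zar_closure_row_space p_cl _ => _ _ [s [c _ ->]].
    rewrite !linearZ linearD linearZ /=.
    by apply/scalemx_sub/addmx_sub; rewrite ?scalemx_sub ?addsmxSl ?addsmxSr.
  case/sub_addsmxP=> -[a b] /= pE.
  have {pE}pE : p = a 0 0 *: o + b 0 0 *: q.
    apply: trmx_inj; rewrite pE linearD !linearZ /=.
    by rewrite {1}[a]mx11_scalar {1}[b]mx11_scalar !mul_scalar_mx.
  have [a0 | a_neq0] := eqVneq (a 0 0) 0.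
    exists (b 0 0); last by rewrite pE a0 scale0r add0r.
    by apply: contraNneq p_neq0 => b0; rewrite pE a0 b0 !scale0r addr0.
  case: p_notin; exists (b 0 0 / a 0 0), (a 0 0) => //.
  by rewrite pE scalerDr scalerA mulrC divfK.
split=> [f f_line | [s [c c_neq0 E]]].
  have [g gE] := meval_line_polynomial f (fun i => (b *: q) i 0) (fun i => (b *: o) i 0).
  suff g0 : g = 0.
    by move: (gE 0); rewrite g0 horner0 => <-; apply: meval_eq => i; rewrite mul0r addr0.
  apply: (@poly_eq0_nat _ _ 1) => m m_gt0; rewrite -gE.
  have m_neq0 : m%:R != 0 :> C by rewrite pnatr_eq0 -lt0n.
  set v := (b * m%:R) *: (o + (m%:R)^-1 *: q).
  have -> : meval (fun i => (b *: q) i 0 + m%:R * (b *: o) i 0) f = meval (fun i => v i 0) f.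
    by apply: meval_eq => i; rewrite !mxE; field.
  apply: f_line; first by rewrite /v scaler_eq0 negb_or mulf_neq0 ?line_neq0.
  by exists (m%:R)^-1, (b * m%:R); rewrite ?mulf_neq0.
move/eqP: (o_notin_q (c^-1 * (b - c * s))); apply.
by rewrite -scalerA scalerBl -scalerA E -scalerBr addrK scalerA mulVf ?scale1r.
Qed.

End AffineLine.

Lemma eq_mulmx_cV (R : pzSemiRingType) m n (A B : 'M[R]_(m, n)) :
  (forall v : 'cV[R]_n, A *m v = B *m v) -> A = B.
Proof.
move=> AB; apply/matrixP => i j.
by move/colP/(_ i): (AB (delta_mx j 0)); rewrite -!colE !mxE.
Qed.

Section CommonEigenvector.
Variables (F : closedFieldType) (N : nat).
Implicit Types (A : 'M[F]_N) (S : 'M[F]_N -> Prop).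

Lemma stable_eigenvector k (E : 'M[F]_(k, N)) A :
  E != 0 -> (E *m A <= E)%MS ->
  exists c (v : 'rV[F]_N), [/\ v != 0, (v <= E)%MS & v *m A = c *: v].
Proof.
move=> E_neq0 EA; set B := row_base E.
have BE : (B :=: E)%MS := eq_row_base E.
have BA : (B *m A <= B)%MS by rewrite BE (submx_trans _ EA) ?submxMr ?BE.
set A_B := B *m A *m pinvmx B.
have [c] : exists c, root (char_poly A_B) c.
  by apply/closed_rootP; rewrite size_char_poly eqSS mxrank_eq0.
rewrite -eigenvalue_root_char => /eigenvalueP[u uA u_neq0].
exists c, (u *m B); split.
- by rewrite mulmx_free_eq0 ?row_base_free.
- by rewrite -BE submxMl.
- by rewrite -mulmxA -[B *m A](mulmxKpV BA) mulmxA uA scalemxAl.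
Qed.

Lemma common_eigenvector (E : 'M[F]_N) S :
  E != 0 -> (forall A, S A -> (E *m A <= E)%MS) ->
  (forall A B, S A -> S B -> E *m A *m B = E *m B *m A) ->
  exists2 v : 'rV[F]_N, v != 0 & (v <= E)%MS /\ forall A, S A -> exists c, v *m A = c *: v.
Proof.
have [k] := ubnP (\rank E); elim: k E => // k IH E rkE E_neq0 E_stable E_comm.
have [E_scalar | ] := classic (forall A, S A -> exists c, E *m A = c *: E).
  have [i Ei_neq0] : exists i, row i E != 0.
    apply/existsP; apply: contraR E_neq0; rewrite negb_exists => /forallP Ei0.
    by apply/eqP/row_matrixP => i; rewrite row0; apply/eqP/negbNE/Ei0.
  exists (row i E) => //; split=> [|A /E_scalar[c EA]]; first exact: row_sub.
  by exists c; rewrite -row_mul EA; apply/rowP => j; rewrite !mxE.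
move=> /not_all_ex_not[A nonscalar].
have [SA /not_ex_all_not A_nonscalar] := imply_to_and _ _ nonscalar.
have [c [v [v_neq0 vE vA]]] := stable_eigenvector E_neq0 (E_stable A SA).
pose E' := (E :&: kermx (A - c%:M))%MS.
have E'E : (E' <= E)%MS := capmxSl _ _.
have E'A : E' *m A = c *: E'.
  have : E' *m (A - c%:M) == 0 by rewrite -sub_kermx capmxSr.
  by rewrite mulmxBr mul_mx_scalar subr_eq0 => /eqP.
have [X E'X] := submxP E'E.
have vE' : (v <= E')%MS.
  by rewrite sub_capmx vE sub_kermx mulmxBr vA mul_mx_scalar subrr eqxx.
have rkE' : (\rank E' < k)%N.
  rewrite -ltnS (leq_trans _ rkE) // ltnS (ltn_leqif (mxrank_leqif_sup E'E)).
  apply/negP => /submx_trans/(_ (capmxSr _ _)); rewrite sub_kermx mulmxBr subr_eq0.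
  by rewrite mul_mx_scalar => /eqP; apply: A_nonscalar.
have E'_neq0 : E' != 0.
  by apply/eqP => E'0; move: vE'; rewrite E'0 submx0 (negbTE v_neq0).
have E'_comm B B' : S B -> S B' -> E' *m B *m B' = E' *m B' *m B.
  by move=> SB SB'; rewrite E'X -!(mulmxA X) E_comm.
have E'_stable B : S B -> (E' *m B <= E')%MS.
  move=> SB; rewrite sub_capmx (submx_trans (submxMr B E'E) (E_stable B SB)) sub_kermx.
  by rewrite mulmxBr E'_comm // E'A -scalemxAl mul_mx_scalar subrr eqxx.
have [w w_neq0 [wE' w_eigen]] := IH E' rkE' E'_neq0 E'_stable E'_comm.
by exists w => //; split=> //; apply: submx_trans wE' E'E.
Qed.

End CommonEigenvector.

Section HeisenbergRepresentation.
Variables (C : numClosedFieldType) (n : nat) (Om : 'M[C]_(n.*2)).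
Variable rho : heis_elt C n -> 'M[C]_(n.*2.+2).
Hypothesis rho1 : rho (heis_one C n) = 1%:M.
Hypothesis rhoM : forall g h, rho (heis_mul Om g h) = rho g *m rho h.
Hypothesis rho_poly : forall i j,
  polyfun (fun x : 'rV[C]_(n.*2 + 1) => rho (lsubmx x, rsubmx x 0 0) i j).

Local Notation N := n.*2.+2.

Definition rhoI t : 'M[C]_N := rho (0, t).

Lemma heis_omega0l w : heis_omega Om 0 w = 0.
Proof. by rewrite /heis_omega !mul0mx mxE. Qed.

Lemma heis_omega0r w : heis_omega Om w 0 = 0.
Proof. by rewrite /heis_omega trmx0 mulmx0 mxE. Qed.

Lemma rhoI0 : rhoI 0 = 1%:M.
Proof. exact: rho1. Qed.

Lemma rhoID s t : rhoI (s + t) = rhoI s *m rhoI t.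
Proof. by rewrite /rhoI -rhoM /heis_mul /= heis_omega0l mulr0 !addr0. Qed.

Lemma rho_split w t : rho (w, t) = rho (w, 0) *m rhoI t.
Proof. by rewrite /rhoI -rhoM /heis_mul /= heis_omega0r mulr0 !addr0 add0r. Qed.

Lemma rhoI_central t h : rhoI t *m rho h = rho h *m rhoI t.
Proof.
case: h => w s; rewrite /rhoI -!rhoM /heis_mul /= heis_omega0l heis_omega0r.
by rewrite mulr0 !addr0 add0r addrC.
Qed.

Lemma rho_mulW w1 w2 :
  rho (w1, 0) *m rho (w2, 0) = rho (w1 + w2, 0) *m rhoI (2^-1 * heis_omega Om w1 w2).
Proof. by rewrite -rhoM -rho_split /heis_mul /= addr0 add0r. Qed.

Lemma rho_unit h : rho h \in unitmx.
Proof.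
pose h' := (- h.1, - h.2 - 2^-1 * heis_omega Om h.1 (- h.1)).
suff /mulmx1_unit[] : rho h *m rho h' = 1%:M by [].
by rewrite -rhoM -rho1 /heis_mul /= subrr addrA subrK subrr.
Qed.

Lemma rhoI_poly : poly_curve rhoI.
Proof.
move=> i j; have [p rho_p] := rho_poly i j.
pose b : 'rV[C]_(n.*2 + 1) := row_mx 0 1%:M.
have [r pr] := meval_line_polynomial p (fun=> 0) (fun k => b 0 k).
exists r => t; rewrite -pr /rhoI.
have := rho_p (t *: b); rewrite !linearZ /= row_mxKl row_mxKr scaler0 !mxE eqxx mulr1 => ->.
by apply: meval_eq => k; rewrite !mxE add0r.
Qed.

Lemma rhoI_fixedl k (X : 'M[C]_(N, k)) c :
  rhoI 1 *m X = c *: X -> forall t, rhoI t *m X = X.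
Proof.
move=> X1; apply: (poly_curve_geometric (c := c) (poly_curve_mulr X rhoI_poly)) => m.
elim: m => [|m IH]; first by rewrite rhoI0 mul1mx scale1r.
by rewrite -natr1 addrC rhoID -mulmxA IH -scalemxAr X1 scalerA -exprSr.
Qed.

Lemma rhoI_fixedr k (X : 'M[C]_(k, N)) c :
  X *m rhoI 1 = c *: X -> forall t, X *m rhoI t = X.
Proof.
move=> X1; apply: (poly_curve_geometric (c := c) (poly_curve_mull X rhoI_poly)) => m.
elim: m => [|m IH]; first by rewrite rhoI0 mulmx1 scale1r.
by rewrite -natr1 rhoID mulmxA IH -scalemxAl X1 scalerA -exprSr.
Qed.

Lemma exists_invariant_covector : exists2 xi : 'rV[C]_N, xi != 0 &
  (forall t, xi *m rhoI t = xi) /\ (forall h, exists2 c, c != 0 & xi *m rho h = c *: xi).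
Proof.
pose E := kermx (rhoI 1 - 1%:M).
have E_fixed Y : (Y <= E)%MS -> forall t, Y *m rhoI t = Y.
  move=> YE; apply: (@rhoI_fixedr _ _ 1); rewrite scale1r; apply/eqP.
  by rewrite -subr_eq0 -{2}[Y]mulmx1 -mulmxBr -sub_kermx.
have E_neq0 : E != 0.
  have [|c [x [x_neq0 _ x1]]] := @stable_eigenvector _ _ _ 1%:M (rhoI 1) (oner_neq0 _).
    exact: submx1.
  apply: contraNneq x_neq0 => E0; rewrite -submx0 -E0 sub_kermx mulmxBr mulmx1.
  by rewrite (rhoI_fixedr x1) subrr.
have E_stable h : (E *m rho h <= E)%MS.
  by rewrite sub_kermx mulmxBr mulmx1 -mulmxA -rhoI_central mulmxA E_fixed ?subrr.
pose S A := exists w, A = rho (w, 0).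
have S_stable A : S A -> (E *m A <= E)%MS by move=> [w ->].
have S_comm A B : S A -> S B -> E *m A *m B = E *m B *m A.
  move=> [w1 ->] [w2 ->]; rewrite -!(mulmxA E) !rho_mulW !(mulmxA E).
  by rewrite !E_fixed ?E_stable // addrC.
have [xi xi_neq0 [xiE xi_eigen]] := common_eigenvector E_neq0 S_stable S_comm.
exists xi => //; split=> [|[w t]]; first exact: E_fixed.
have [c xi_w] := xi_eigen _ (ex_intro _ w erefl).
exists c; last by rewrite rho_split mulmxA xi_w -scalemxAl E_fixed.
apply: contraNneq xi_neq0 => c0.
by rewrite -[xi](mulmxK (rho_unit (w, t))) rho_split mulmxA xi_w c0 scale0r !mul0mx.
Qed.

Section Boundary.
Variable o0 : 'cV[C]_N.
Local Notation open_orbit := (pv_orbit rho (@whole_group C n) o0).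
Hypothesis rho_eff : pv_effective rho.
Hypothesis open_orbit_dense : forall p, p != 0 -> zar_closure open_orbit p.
Hypothesis boundary_fixed : forall v, v != 0 -> ~ open_orbit v ->
  proj_eq (rho (heis_T C n) *m v) v.
Variable xi : 'rV[C]_N.
Hypothesis xi_neq0 : xi != 0.
Hypothesis xi_fixed : forall t, xi *m rhoI t = xi.
Hypothesis xi_eigen : forall h, exists2 c, c != 0 & xi *m rho h = c *: xi.

Lemma xi_open_orbit_neq0 v : open_orbit v -> xi *m v != 0.
Proof.
have xi_orbit u : open_orbit u -> exists2 d, d != 0 & xi *m u = d *: (xi *m o0).
  move=> [h _ [c c_neq0 ->]]; have [d d_neq0 xi_h] := xi_eigen h.
  exists (c * d); first exact: mulf_neq0.
  by rewrite -scalemxAr mulmxA xi_h -scalemxAl scalerA.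
have xi_o0 : xi *m o0 != 0.
  apply: contraNneq xi_neq0 => xi_o0; apply/eqP/rowP => i.
  have delta_neq0 : delta_mx i 0 != 0 :> 'cV[C]_N.
    by apply/eqP => /matrixP/(_ i 0)/eqP; rewrite !mxE !eqxx oner_eq0.
  have : xi *m (delta_mx i 0 : 'cV_N) = 0.
    apply: zar_closure_form (open_orbit_dense delta_neq0) _ => u _ /xi_orbit[d _ ->].
    by rewrite xi_o0 scaler0.
  by rewrite -colE => /colP/(_ 0); rewrite !mxE.
by move=> /xi_orbit[d d_neq0 ->]; rewrite scaler_eq0 negb_or d_neq0.
Qed.

Lemma rhoI_fix_ker_xi (v : 'cV[C]_N) : xi *m v = 0 -> forall t, rhoI t *m v = v.
Proof.
move=> xi_v; have [-> t | v_neq0] := eqVneq v 0; first by rewrite mulmx0.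
have v_boundary : ~ open_orbit v by move/xi_open_orbit_neq0; rewrite xi_v eqxx.
have [c _ v1] := boundary_fixed v_neq0 v_boundary.
exact: rhoI_fixedl v1.
Qed.

Lemma rhoI_transvection : exists2 q : 'cV[C]_N, q != 0 &
  xi *m q = 0 /\ forall t, rhoI t = 1%:M + t *: (q *m xi).
Proof.
have [i xi_i] : exists i, xi 0 i != 0.
  apply/existsP; apply: contraR xi_neq0; rewrite negb_exists => /forallP xi0.
  by apply/eqP/rowP => i; rewrite mxE; apply/eqP/negbNE/xi0.
pose e : 'cV[C]_N := (xi 0 i)^-1 *: delta_mx i 0.
have xi_e : xi *m e = 1%:M.
  by apply/rowP => j; rewrite ord1 -scalemxAr -colE !mxE eqxx mulVf.
(* [rhoI t = 1 + q t xi], and [q] is additive and polynomial, hence linear. *)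
pose q t := rhoI t *m e - e.
have rhoI_q t (v : 'cV_N) : rhoI t *m v = v + q t *m (xi *m v).
  have xi_w : xi *m (v - e *m (xi *m v)) = 0.
    by rewrite mulmxBr (mulmxA xi) xi_e mul1mx subrr.
  rewrite -{1}(subrK (e *m (xi *m v)) v) mulmxDr (rhoI_fix_ker_xi xi_w) (mulmxA (rhoI t)).
  by rewrite mulmxBl addrA addrAC.
have xi_q t : xi *m q t = 0 by rewrite mulmxBr mulmxA xi_fixed subrr.
have q_add : {morph q : s t / s + t}.
  move=> s t; rewrite {1}/q rhoID -mulmxA rhoI_q (mulmxA xi) xi_fixed xi_e mulmx1.
  by rewrite addrAC addrC.
have q_poly : poly_curve q.
  move=> j k; have [p pq] := polynomial_funB (poly_curve_mulr e rhoI_poly j k)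
    (polynomial_fun_cst (e j k)).
  by exists p => t; rewrite -pq !mxE.
have rhoI_tr t : rhoI t = 1%:M + t *: (q 1 *m xi).
  apply: eq_mulmx_cV => v; rewrite rhoI_q (poly_curve_additive q_poly q_add t).
  by rewrite mulmxDl mul1mx -!scalemxAl mulmxA.
exists (q 1); last by split.
apply/eqP => q1_0; have rhoI1 : rhoI 1 = 1%:M by rewrite rhoI_tr q1_0 mul0mx scaler0 addr0.
by have /(congr1 snd)/eqP := @rho_eff (0, 1) (ex_intro _ 1 rhoI1); rewrite oner_eq0.
Qed.

Lemma open_orbit_not_multiple o q :
  open_orbit o -> xi *m q = 0 -> forall c, o != c *: q.
Proof.
move=> /xi_open_orbit_neq0 xi_o xi_q c; apply: contraNneq xi_o => ->.
by rewrite -scalemxAr xi_q scaler0.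
Qed.

Lemma center_orbit_affine_line o q :
  open_orbit o -> (forall t, rhoI t = 1%:M + t *: (q *m xi)) ->
  forall v, pv_orbit rho (@center_I C n) o v <-> affine_line o q v.
Proof.
move=> /xi_open_orbit_neq0 xi_o rhoI_q v; set a := (xi *m o) 0 0.
have a_neq0 : a != 0.
  by apply: contraNneq xi_o => a0; rewrite [xi *m o]mx11_scalar -/a a0 raddf0.
have rhoI_o t : rhoI t *m o = o + (t * a) *: q.
  rewrite rhoI_q mulmxDl mul1mx -scalemxAl -mulmxA [xi *m o]mx11_scalar.
  by rewrite mul_mx_scalar scalerA.
split=> [[_ [t ->] v_o] | [s v_o]]; first by exists (t * a); rewrite -rhoI_o.
exists (0, s / a); first by exists (s / a).
by rewrite -[rho _]/(rhoI (s / a)) rhoI_o divfK.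
Qed.

End Boundary.
End HeisenbergRepresentation.

Theorem lemma2p5 (R : realType) (n : nat) (hn : (1 <= n)%N)
    (Om : 'M[R[i]]_(n.*2))
    (Om_skew : Om^T = - Om) (Om_nondeg : \det Om != 0)
    (rho : heis_elt R[i] n -> 'M[R[i]]_(n.*2.+2))
    (o0 : 'cV[R[i]]_(n.*2.+2))
    (Hstruct : heis_structure Om rho o0)
    (HT : forall v : 'cV[R[i]]_(n.*2.+2), v != 0 ->
       ~ pv_orbit rho (@whole_group _ n) o0 v ->
       proj_eq (rho (heis_T _ n) *m v) v) :
  exists2 q : 'cV[R[i]]_(n.*2.+2), q != 0 &
    forall o, o != 0 -> pv_orbit rho (@whole_group _ n) o0 o ->
      forall p, p != 0 ->
        ((zar_closure (pv_orbit rho (@center_I _ n) o) p /\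
          ~ pv_orbit rho (@center_I _ n) o p) <-> proj_eq p q).
Proof.
case: Hstruct => [[rho1 rhoM rho_poly] rho_eff _ _ dense].
have [xi xi_neq0 [xi_fixed xi_eigen]] := exists_invariant_covector rho1 rhoM rho_poly.
have [q q_neq0 [xi_q rhoI_q]] :=
  rhoI_transvection rho1 rhoM rho_poly rho_eff dense HT xi_neq0 xi_fixed xi_eigen.
exists q => // o _ o_open p p_neq0.
have o_line := center_orbit_affine_line dense xi_neq0 xi_eigen o_open rhoI_q.
have o_notin_q := open_orbit_not_multiple dense xi_neq0 xi_eigen o_open xi_q.
rewrite -(affine_line_boundary o_notin_q p_neq0).
split=> -[p_cl p_notin]; split.
- exact: eq_zar_closure o_line p_cl.
- by move/o_line.
- exact: eq_zar_closure (fun v => iff_sym (o_line v)) p_cl.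
- by move/o_line.
Qed.
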